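(* Let $G$ be the connected group with Lie algebra $\mathbf g=su_2(\mathbb C)\ltimes\mathbb R^3$ described below, $H$ the subgroup $\{(A,0)\}$ with Lie algebra $\mathbf h=\langle X,Y,Z\rangle$, and $\mathbf m_1=\langle V_1+Z,\ V_2+Y,\ V_3-X\rangle$. There is no global almost differentiable strongly left alternative left A-loop with $G$ as group topologically generated by its left translations, $H$ as stabilizer of the identity, and $T_1\sigma(G/H)=\mathbf m_1$.
   Context: $G$ consists of pairs $(A,X)$ with $A\in SU_2(\mathbb C)$ modulo $\pm 1$ and $X=\begin{pmatrix}k&li+n\\-li+n&-k\end{pmatrix}$, $k,l,n\in\mathbb R$, multiplied by $(A_1,X_1)(A_2,X_2)=(A_1A_2,A_2^{-1}X_1A_2+X_2)$. Basis of $\mathbf g$: $X=(\begin{pmatrix}i&0\\0&-i\end{pmatrix},0)$, $Y=(\begin{pmatrix}0&i\\i&0\end{pmatrix},0)$, $Z=(\begin{pmatrix}0&-1\\1&0\end{pmatrix},0)$, $V_1=(0,\begin{pmatrix}0&i\\-i&0\end{pmatrix})$, $V_2=(0,\begin{pmatrix}0&1\\1&0\end{pmatrix})$, $V_3=(0,\begin{pmatrix}-1&0\\0&1\end{pmatrix})$. A loop is a set with a binary operation and two-sided identity $e$ with uniquely solvable left and right division; a left A-loop has every $\lambda_{xy}^{-1}\lambda_x\lambda_y$ an automorphism ($\lambda_a(y)=a\cdot y$). For a connected loop, $G$ is the group topologically generated by left translations, $H$ the stabilizer of $e$, and left translations form the image of a sharply transitive global section $\sigma:G/H\to G$, $\sigma(H)=1$;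 almost differentiable means $G$ Lie and $\sigma$ differentiable; strongly left alternative means $\exp(T_1\sigma(G/H))\subseteq\sigma(G/H)$. *)

(* Concrete model of G = (SU_2(C)/{+-1}) x| R^3. *)
From Stdlib Require Import Reals.
Open Scope R_scope.

Record C := mkC { re : R; im : R }.
Definition Cadd (z w : C) : C := mkC (re z + re w) (im z + im w).
Definition Cmul (z w : C) : C :=
  mkC (re z * re w - im z * im w) (re z * im w + im z * re w).
Definition Copp (z : C) : C := mkC (- re z) (- im z).
Definition Cconj (z : C) : C := mkC (re z) (- im z).
Definition Cscal (r : R) (z : C) : C := mkC (r * re z) (r * im z).
Definition C0 : C := mkC 0 0.
Definition C1 : C := mkC 1 0.
Definition Ci : C := mkC 0 1.
Definition Cnorm1 (z : C) : R := Rabs (re z) + Rabs (im z).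

Record M2 := mkM { a11 : C; a12 : C; a21 : C; a22 : C }.
Definition Madd (A B : M2) : M2 :=
  mkM (Cadd (a11 A) (a11 B)) (Cadd (a12 A) (a12 B))
      (Cadd (a21 A) (a21 B)) (Cadd (a22 A) (a22 B)).
Definition Mmul (A B : M2) : M2 :=
  mkM (Cadd (Cmul (a11 A) (a11 B)) (Cmul (a12 A) (a21 B)))
      (Cadd (Cmul (a11 A) (a12 B)) (Cmul (a12 A) (a22 B)))
      (Cadd (Cmul (a21 A) (a11 B)) (Cmul (a22 A) (a21 B)))
      (Cadd (Cmul (a21 A) (a12 B)) (Cmul (a22 A) (a22 B))).
Definition Mopp (A : M2) : M2 :=
  mkM (Copp (a11 A)) (Copp (a12 A)) (Copp (a21 A)) (Copp (a22 A)).
Definition Mscal (r : R) (A : M2) : M2 :=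
  mkM (Cscal r (a11 A)) (Cscal r (a12 A)) (Cscal r (a21 A)) (Cscal r (a22 A)).
Definition Madj (A : M2) : M2 :=
  mkM (Cconj (a11 A)) (Cconj (a21 A)) (Cconj (a12 A)) (Cconj (a22 A)).
Definition Mdet (A : M2) : C :=
  Cadd (Cmul (a11 A) (a22 A)) (Copp (Cmul (a12 A) (a21 A))).
Definition Mid : M2 := mkM C1 C0 C0 C1.
Definition Mzero : M2 := mkM C0 C0 C0 C0.
Definition Mnorm1 (A : M2) : R :=
  Cnorm1 (a11 A) + Cnorm1 (a12 A) + Cnorm1 (a21 A) + Cnorm1 (a22 A).

Definition SU2 (A : M2) : Prop := Mmul (Madj A) A = Mid /\ Mdet A = C1.

Definition herm (k l n : R) : M2 :=
  mkM (mkC k 0) (mkC n l) (mkC n (- l)) (mkC (- k) 0).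
Definition isV (X : M2) : Prop := exists k l n, X = herm k l n.

Definition P := (M2 * M2)%type.
Definition padd (u v : P) : P := (Madd (fst u) (fst v), Madd (snd u) (snd v)).
Definition pscal (r : R) (u : P) : P := (Mscal r (fst u), Mscal r (snd u)).
Definition psub (u v : P) : P := padd u (pscal (-1) v).
Definition pnorm (u : P) : R := Mnorm1 (fst u) + Mnorm1 (snd u).

(* Elements of G are pairs (A,X), A in SU_2, taken modulo A ~ -A.
   We work with representatives in P and the relation [geq]. *)
Definition inG (g : P) : Prop := SU2 (fst g) /\ isV (snd g).
(* (A1,X1)(A2,X2) = (A1 A2, A2^{-1} X1 A2 + X2), with A2^{-1} = A2^* *)
Definition gmul (g1 g2 : P) : P :=
  (Mmul (fst g1) (fst g2),
   Madd (Mmul (Mmul (Madj (fst g2)) (snd g1)) (fst g2)) (snd g2)).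
Definition gone : P := (Mid, Mzero).
Definition ginv (g : P) : P :=
  (Madj (fst g), Mopp (Mmul (Mmul (fst g) (snd g)) (Madj (fst g)))).
Definition gneg (g : P) : P := (Mopp (fst g), snd g).
Definition geq (g1 g2 : P) : Prop :=
  (fst g2 = fst g1 \/ fst g2 = Mopp (fst g1)) /\ snd g2 = snd g1.

(* H = {(A,0)} and left cosets gH (H contains -1, so G/H is the same
   whether computed in SU_2 x| R^3 or in its quotient by {+-1}) *)
Definition inH (g : P) : Prop := inG g /\ snd g = Mzero.
Definition sameCoset (g1 g2 : P) : Prop := exists h, inH h /\ g2 = gmul g1 h.

Definition LX : P := (mkM Ci C0 C0 (Copp Ci), Mzero).
Definition LY : P := (mkM C0 Ci Ci C0, Mzero).
Definition LZ : P := (mkM C0 (Copp C1) C1 C0, Mzero).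
Definition LV1 : P := (Mzero, mkM C0 Ci (Copp Ci) C0).
Definition LV2 : P := (Mzero, mkM C0 C1 C1 C0).
Definition LV3 : P := (Mzero, mkM (Copp C1) C0 C0 C1).

Definition m1 (v : P) : Prop :=
  exists al be ga : R,
    v = padd (pscal al (padd LV1 LZ))
             (padd (pscal be (padd LV2 LY)) (pscal ga (psub LV3 LX))).

(* sigma is given as a map on representatives, constant on cosets. *)
Definition image (sigma : P -> P) (s : P) : Prop :=
  exists z, inG z /\ geq (sigma z) s.

Definition section_ok (sigma : P -> P) : Prop :=
  (forall g, inG g -> inG (sigma g)) /\
  (forall g1 g2, inG g1 -> inG g2 -> sameCoset g1 g2 -> geq (sigma g1) (sigma g2)) /\
  (forall g, inG g -> sameCoset g (sigma g)) /\
  geq (sigma gone) gone /\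
  (forall x y, inG x -> inG y ->
     (exists s, image sigma s /\ sameCoset (gmul s x) y) /\
     (forall s s', image sigma s -> image sigma s' ->
        sameCoset (gmul s x) y -> sameCoset (gmul s' x) y -> geq s s')).

Definition lmul (sigma : P -> P) (x y : P) : P := gmul (sigma x) y.

Definition is_loop (sigma : P -> P) : Prop :=
  (forall y, inG y -> sameCoset (lmul sigma gone y) y) /\
  (forall x, inG x -> sameCoset (lmul sigma x gone) x) /\
  (forall a b, inG a -> inG b ->
     (exists y, inG y /\ sameCoset (lmul sigma a y) b) /\
     (forall y y', inG y -> inG y' -> sameCoset (lmul sigma a y) b ->
        sameCoset (lmul sigma a y') b -> sameCoset y y')) /\
  (forall a b, inG a -> inG b ->
     (exists x, inG x /\ sameCoset (lmul sigma x a) b) /\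
     (forall x x', inG x -> inG x' -> sameCoset (lmul sigma x a) b ->
        sameCoset (lmul sigma x' a) b -> sameCoset x x')).

Definition loop_aut (sigma : P -> P) (phi : P -> P) : Prop :=
  (forall z, inG z -> inG (phi z)) /\
  (forall z1 z2, inG z1 -> inG z2 -> sameCoset z1 z2 -> sameCoset (phi z1) (phi z2)) /\
  (forall z1 z2, inG z1 -> inG z2 -> sameCoset (phi z1) (phi z2) -> sameCoset z1 z2) /\
  (forall w, inG w -> exists z, inG z /\ sameCoset (phi z) w) /\
  (forall z1 z2, inG z1 -> inG z2 ->
     sameCoset (phi (lmul sigma z1 z2)) (lmul sigma (phi z1) (phi z2))).

(* left A-loop: lambda_{xy}^{-1} lambda_x lambda_y is an automorphism;
   lambda_a acts as left multiplication by sigma(a), so its inverse is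
   left multiplication by sigma(a)^{-1}. *)
Definition left_A_loop (sigma : P -> P) : Prop :=
  forall x y, inG x -> inG y ->
    loop_aut sigma
      (fun z => gmul (ginv (sigma (lmul sigma x y)))
                     (gmul (sigma x) (gmul (sigma y) z))).

Inductive gen (S : P -> Prop) : P -> Prop :=
| gen_one : gen S gone
| gen_l : forall s g, S s -> gen S g -> gen S (gmul s g)
| gen_li : forall s g, S s -> gen S g -> gen S (gmul (ginv s) g).

Definition top_generates (S : P -> Prop) : Prop :=
  forall g, inG g -> forall eps, eps > 0 ->
    exists h, gen S h /\ (pnorm (psub h g) < eps \/ pnorm (psub (gneg h) g) < eps).

Definition frechet (F : P -> P) (p : P) : Prop :=
  exists L : P -> P,
    (forall u v, L (padd u v) = padd (L u) (L v)) /\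
    (forall r u, L (pscal r u) = pscal r (L u)) /\
    (forall eps, eps > 0 -> exists del, del > 0 /\
       forall h, pnorm h < del ->
         pnorm (psub (psub (F (padd p h)) (F p)) (L h)) <= eps * pnorm h).

(* a map G -> G (here sigma composed with G -> G/H) is differentiable:
   near every point it is (up to the sign ambiguity) the restriction of a
   Frechet-differentiable map defined on an open set of the ambient space *)
Definition diff_on_G (f : P -> P) : Prop :=
  forall g0, inG g0 -> exists (del : R) (F : P -> P), del > 0 /\
    (forall g, pnorm (psub g g0) < del -> frechet F g) /\
    (forall g, inG g -> pnorm (psub g g0) < del -> geq (F g) (f g)).

Definition curve_deriv0 (c : R -> P) (v : P) : Prop :=
  forall eps, eps > 0 -> exists del, del > 0 /\
    forall t, t <> 0 -> Rabs t < del ->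
      pnorm (psub (pscal (/ t) (psub (c t) (c 0))) v) < eps.

Definition tangent_at_one (sigma : P -> P) (v : P) : Prop :=
  exists (c : R -> P) (eps : R), eps > 0 /\ c 0 = gone /\ curve_deriv0 c v /\
    forall t, Rabs t < eps -> inG (c t) /\ image sigma (c t).

(* one-parameter subgroup with initial velocity v; exp v = gamma 1 *)
Definition oneps (gamma : R -> P) (v : P) : Prop :=
  (forall t, inG (gamma t)) /\
  (forall s t, gamma (s + t) = gmul (gamma s) (gamma t)) /\
  curve_deriv0 gamma v.

Definition strongly_left_alternative (sigma : P -> P) : Prop :=
  forall v, tangent_at_one sigma v ->
    forall gamma, oneps gamma v -> image sigma (gamma 1).

(* For v in m1, strong left alternativity puts exp(v) into sigma(G/H).  The
   elements exp((pi/2)(V3 - X)) and exp((pi/2)(V1 + Z)) are different elements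
   of G, yet both map the same coset xH to the same coset yH, which contradicts
   the sharp transitivity of sigma(G/H). *)

From Pilot Require Import Defs.
From Stdlib Require Import Reals Lra Lia List.
From Coquelicot Require Import Coquelicot.
Open Scope R_scope.
Import ListNotations.

Lemma C_ext (z w : Defs.C) : re z = re w -> im z = im w -> z = w.
Proof. destruct z, w; simpl; intros; subst; reflexivity. Qed.

Lemma M2_ext (A B : M2) :
  a11 A = a11 B -> a12 A = a12 B -> a21 A = a21 B -> a22 A = a22 B -> A = B.
Proof. destruct A, B; simpl; intros; subst; reflexivity. Qed.

Lemma P_ext (u w : P) : fst u = fst w -> snd u = snd w -> u = w.
Proof. destruct u, w; simpl; intros; subst; reflexivity. Qed.

Ltac m2_ext := apply M2_ext; apply C_ext; simpl.
Ltac p_ext := apply P_ext; m2_ext.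

Lemma cos_sq x : cos x ^ 2 = 1 - sin x ^ 2.
Proof. pose proof (sin2_cos2 x) as H; unfold Rsqr in H; lra. Qed.

Ltac trig_ring := ring_simplify; try rewrite !cos_sq; ring.

Definition coords (p : P) : list R :=
  let (A, B) := p in
  [re (a11 A); im (a11 A); re (a12 A); im (a12 A);
   re (a21 A); im (a21 A); re (a22 A); im (a22 A);
   re (a11 B); im (a11 B); re (a12 B); im (a12 B);
   re (a21 B); im (a21 B); re (a22 B); im (a22 B)].

Definition coord (i : nat) (p : P) : R := nth i (coords p) 0.

Lemma coord_difference_quotient i (u w v : P) t :
  coord i (psub (pscal (/ t) (psub u w)) v) =
  / t * (coord i u + -1 * coord i w) + -1 * coord i v.
Proof.
  destruct u as [[[? ?] [? ?] [? ?] [? ?]] [[? ?] [? ?] [? ?] [? ?]]].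
  destruct w as [[[? ?] [? ?] [? ?] [? ?]] [[? ?] [? ?] [? ?] [? ?]]].
  destruct v as [[[? ?] [? ?] [? ?] [? ?]] [[? ?] [? ?] [? ?] [? ?]]].
  do 16 (destruct i as [|i]; [reflexivity|]).
  unfold coord; simpl; destruct i; ring.
Qed.

Lemma pnorm_lt_coordwise (u : P) e :
  (forall i, (i < 16)%nat -> Rabs (coord i u) < e) -> pnorm u < 16 * e.
Proof.
  intros H.
  destruct u as [[[? ?] [? ?] [? ?] [? ?]] [[? ?] [? ?] [? ?] [? ?]]].
  pose proof (H 0%nat ltac:(lia)); pose proof (H 1%nat ltac:(lia));
  pose proof (H 2%nat ltac:(lia)); pose proof (H 3%nat ltac:(lia));
  pose proof (H 4%nat ltac:(lia)); pose proof (H 5%nat ltac:(lia));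
  pose proof (H 6%nat ltac:(lia)); pose proof (H 7%nat ltac:(lia));
  pose proof (H 8%nat ltac:(lia)); pose proof (H 9%nat ltac:(lia));
  pose proof (H 10%nat ltac:(lia)); pose proof (H 11%nat ltac:(lia));
  pose proof (H 12%nat ltac:(lia)); pose proof (H 13%nat ltac:(lia));
  pose proof (H 14%nat ltac:(lia)); pose proof (H 15%nat ltac:(lia)).
  unfold coord, pnorm, Mnorm1, Cnorm1 in *; simpl in *; lra.
Qed.

Definition near0 (Q : R -> Prop) : Prop :=
  exists del, del > 0 /\ forall t, t <> 0 -> Rabs t < del -> Q t.

Lemma near0_forall_lt n (Q : nat -> R -> Prop) :
  (forall i, (i < n)%nat -> near0 (Q i)) ->
  near0 (fun t => forall i, (i < n)%nat -> Q i t).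
Proof.
  induction n as [|n IH]; intros H.
  - exists 1; split; [lra | intros; lia].
  - destruct IH as [d1 [Hd1 H1]]; [intros; apply H; lia|].
    destruct (H n ltac:(lia)) as [d2 [Hd2 H2]].
    exists (Rmin d1 d2); split; [apply Rmin_pos; lra|].
    intros t Ht Hlt i Hi.
    assert (Rabs t < d1) by (eapply Rlt_le_trans; [exact Hlt | apply Rmin_l]).
    assert (Rabs t < d2) by (eapply Rlt_le_trans; [exact Hlt | apply Rmin_r]).
    destruct (Nat.eq_dec i n) as [-> | Hne]; [auto | apply H1; auto; lia].
Qed.

Lemma curve_deriv0_coordwise (c : R -> P) (v : P) :
  (forall i, (i < 16)%nat ->
     derivable_pt_lim (fun t => coord i (c t)) 0 (coord i v)) ->
  curve_deriv0 c v.
Proof.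
  intros H eps Heps.
  destruct (near0_forall_lt 16 (fun i t =>
      Rabs (coord i (psub (pscal (/ t) (psub (c t) (c 0))) v)) < eps / 16))
    as [del [Hdel Hnear]].
  { intros i Hi.
    destruct (H i Hi (eps / 16) ltac:(lra)) as [d Hd].
    exists (pos d); split; [apply cond_pos|].
    intros t Ht Hlt.
    rewrite coord_difference_quotient.
    specialize (Hd t Ht Hlt); rewrite Rplus_0_l in Hd.
    replace (/ t * (coord i (c t) + -1 * coord i (c 0)) + -1 * coord i v)
      with ((coord i (c t) - coord i (c 0)) / t - coord i v) by (field; auto).
    exact Hd. }
  exists del; split; [exact Hdel|].
  intros t Ht Hlt.
  replace eps with (16 * (eps / 16)) by field.
  apply pnorm_lt_coordwise; auto.
Qed.

(* exp(k t (V3 - X)) and exp(k t (V1 + Z)): each rotation part fixes the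
   translation direction, so the translation part grows linearly. *)
Definition exp_V3_X (k t : R) : P :=
  (mkM (mkC (cos (k * t)) (- sin (k * t))) C0 C0 (mkC (cos (k * t)) (sin (k * t))),
   herm (- (k * t)) 0 0).

Definition exp_V1_Z (k t : R) : P :=
  (mkM (mkC (cos (k * t)) 0) (mkC (- sin (k * t)) 0)
       (mkC (sin (k * t)) 0) (mkC (cos (k * t)) 0),
   herm 0 (k * t) 0).

Ltac oneps_tac :=
  split; [|split];
  [ intros t; split; [split|];
    [ unfold Mmul, Madj, Mid, Cadd, Cmul, Cconj, C1, C0; simpl; m2_ext; trig_ring
    | unfold Mdet, Cadd, Cmul, Copp, C1, C0; simpl; apply C_ext; simpl; trig_ring
    | eexists _, _, _; reflexivity ]
  | intros s t; unfold exp_V3_X, exp_V1_Z, gmul, herm; simpl;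
    rewrite Rmult_plus_distr_l, cos_plus, sin_plus;
    unfold Mmul, Madd, Madj, Cadd, Cmul, Cconj, C0; simpl; p_ext; trig_ring
  | apply curve_deriv0_coordwise; intros i Hi;
    do 16 (destruct i as [|i];
           [ unfold coord; simpl; apply is_derive_Reals; auto_derive; auto;
             rewrite ?Rmult_0_r, ?cos_0, ?sin_0; ring |]);
    lia ].

Lemma oneps_exp_V3_X k : oneps (exp_V3_X k) (pscal k (psub LV3 LX)).
Proof. oneps_tac. Qed.

Lemma oneps_exp_V1_Z k : oneps (exp_V1_Z k) (pscal k (padd LV1 LZ)).
Proof. oneps_tac. Qed.

Lemma m1_V3_X k : m1 (pscal k (psub LV3 LX)).
Proof. exists 0, 0, k; p_ext; ring. Qed.

Lemma m1_V1_Z k : m1 (pscal k (padd LV1 LZ)).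
Proof. exists k, 0, 0; p_ext; ring. Qed.

Lemma exp_in_image sigma v gamma :
  strongly_left_alternative sigma ->
  (forall v, tangent_at_one sigma v <-> m1 v) ->
  m1 v -> oneps gamma v -> image sigma (gamma 1).
Proof. intros Hsla Htan Hv Hgamma; apply (Hsla v); [apply Htan|]; assumption. Qed.

(* Cosets (A, X) H correspond to A X A^*; [coset_pt] is chosen so that both
   exponentials at k = pi/2 send its coset to the same one. *)
Definition coset_pt : P := (Mid, herm (PI / 4) (- (PI / 4)) 0).

Lemma inG_coset_pt : inG coset_pt.
Proof.
  split; [split|].
  - m2_ext; ring.
  - apply C_ext; simpl; ring.
  - eexists _, _, _; reflexivity.
Qed.

Lemma inG_exp_V3_X_coset_pt : inG (gmul (exp_V3_X (PI / 2) 1) coset_pt).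
Proof.
  unfold gmul, exp_V3_X, coset_pt; rewrite Rmult_1_r, cos_PI2, sin_PI2.
  split; [split|].
  - m2_ext; ring.
  - apply C_ext; simpl; ring.
  - exists (- (PI / 2) + PI / 4), (- (PI / 4)), 0; m2_ext; ring.
Qed.

Lemma inH_gone : inH gone.
Proof.
  split; [split; [split|]|].
  - m2_ext; ring.
  - apply C_ext; simpl; ring.
  - exists 0, 0, 0; m2_ext; ring.
  - reflexivity.
Qed.

(* The matrix of the basis vector Y is itself in SU_2, so (Y, 0) lies in H. *)
Lemma inH_LY : inH LY.
Proof.
  split; [split; [split|]|].
  - m2_ext; ring.
  - apply C_ext; simpl; ring.
  - exists 0, 0, 0; m2_ext; ring.
  - reflexivity.
Qed.

Lemma exp_V3_X_coset_pt :
  gmul (exp_V3_X (PI / 2) 1) coset_pt =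
  gmul (gmul (exp_V1_Z (PI / 2) 1) coset_pt) LY.
Proof.
  unfold gmul, exp_V3_X, exp_V1_Z, coset_pt, LY;
  rewrite !Rmult_1_r, cos_PI2, sin_PI2; p_ext; field.
Qed.

Lemma exp_V3_X_neq_exp_V1_Z : ~ geq (exp_V3_X (PI / 2) 1) (exp_V1_Z (PI / 2) 1).
Proof.
  intros [_ E]; apply (f_equal (fun A => re (a11 A))) in E; simpl in E.
  pose proof PI_RGT_0; lra.
Qed.

Theorem proposition23 :
  ~ exists sigma : P -> P,
      section_ok sigma /\
      is_loop sigma /\
      left_A_loop sigma /\
      top_generates (image sigma) /\
      diff_on_G sigma /\
      strongly_left_alternative sigma /\
      (forall v, tangent_at_one sigma v <-> m1 v).
Proof.
  intros [sigma [[_ [_ [_ [_ Hsharp]]]] [_ [_ [_ [_ [Hsla Htan]]]]]]].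
  set (y := gmul (exp_V3_X (PI / 2) 1) coset_pt).
  destruct (Hsharp coset_pt y inG_coset_pt inG_exp_V3_X_coset_pt) as [_ Hunique].
  apply exp_V3_X_neq_exp_V1_Z, Hunique.
  - exact (exp_in_image _ _ _ Hsla Htan (m1_V3_X _) (oneps_exp_V3_X _)).
  - exact (exp_in_image _ _ _ Hsla Htan (m1_V1_Z _) (oneps_exp_V1_Z _)).
  - exists gone; split; [exact inH_gone | unfold y, gone; p_ext; ring].
  - exists LY; split; [exact inH_LY | exact exp_V3_X_coset_pt].
Qed.
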